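(* Fix $k\in\mathbb{Z}_{\ge0}$. Let $S$ be a ubiquitously dense subset of $[0,\infty)$ and $R=(r_i)_{i\in\mathbb{Z}_{\ge0}}$ an $S$-gauge system on $\Omega$. Then: (1) $\Lambda^k[R]\in\mathrm{Met}(N(\Omega))$; (2) the diameter of $N(\Omega)$ with respect to $\Lambda^k[R]$ is at most $2\cdot2^{-F_k(0)}=2^{-k}$; (3) the metric $\Lambda^k[R]$ is complete.
   Context: A subset $S$ of $[0,\infty)$ is ubiquitously dense if $\operatorname{card}(U\cap S)=\operatorname{card}(S)$ for every non-empty open $U\subseteq[0,\infty)$. Fix a bijection $Q\colon\mathbb{Z}_{\ge0}\to\mathbb{Q}_{\ge0}$ with property (M): setting $\mu_m=\min Q^{-1}([m,m+1)\cap\mathbb{Q})$, we have $Q(\mu_m)=m$ and $\mu_m<\mu_{m+1}$ for all $m$. For a summable sequence $\alpha=(a_i)$ of positive reals and $B\subseteq\mathbb{Q}_{\ge0}$, $\langle\alpha,B\rangle=\sum_{i:\,Q(i)\in B}a_i$ ($=0$ if $B=\emptyset$). For $k\in\mathbb{Z}_{\ge0}$ let $F_k(n)=2^n+k$ and $\lambda^k_i=2^{-F_k(i)}$, $\lambda^k=(\lambda^k_i)_{i\ge0}$. $\Omega$ is a discrete space of cardinality $\mathfrak{c}$ and $N(\Omega)=\Omega^{\mathbb{Z}_{\ge0}}$ with the product topology. For $T\subseteq[0,\infty)$, a $T$-semi-metric on a set $Y$ is a symmetric map $r\colon Y\times Y\to[0,\infty)$ with $r(x,y)=0$ iff $x=y$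 and $r(x,y)\in T$ for $x\ne y$; it is strongly rigid if $r(x,y)=r(u,v)\neq0$ implies $\{x,y\}=\{u,v\}$. For dense $S\subseteq[0,\infty)$, an $S$-gauge system on $\Omega$ is a sequence $(r_i)_{i\ge0}$ with each $r_i$ a strongly rigid $(S\cap(i,i+1))$-semi-metric on $\Omega$. Put $J(m,t)=[m,t)\cap\mathbb{Q}$, $\Lambda^k_m[r](a,b)=\langle\lambda^k,J(m,r(a,b))\rangle$ for $a,b\in\Omega$, and for $x=(x_i),y=(y_i)\in N(\Omega)$, $\Lambda^k[R](x,y)=\sum_{m\ge0}\Lambda^k_m[r_m](x_m,y_m)=\langle\lambda^k,\bigsqcup_{m\ge0}J(m,r_m(x_m,y_m))\rangle$. $\mathrm{Met}(Y)$ is the set of metrics on $Y$ generating its topology. *)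

From Stdlib Require Import Reals Lra QArith Qreals ClassicalEpsilon List.
From Coquelicot Require Import Coquelicot.
Open Scope R_scope.

Definition is_rat (x : R) : Prop := exists q : Q, Q2R q = x.

Definition rat_enum (Qe : nat -> R) : Prop :=
  (forall i j, Qe i = Qe j -> i = j) /\
  (forall x, (is_rat x /\ 0 <= x) <-> exists i, Qe i = x).

Definition is_mu (Qe : nat -> R) (m i : nat) : Prop :=
  (INR m <= Qe i < INR m + 1) /\
  (forall j, INR m <= Qe j < INR m + 1 -> (i <= j)%nat).

Definition property_M (Qe : nat -> R) : Prop :=
  (forall m i, is_mu Qe m i -> Qe i = INR m) /\
  (forall m i i', is_mu Qe m i -> is_mu Qe (S m) i' -> (i < i')%nat).

Definition pair_sum (Qe : nat -> R) (a : nat -> R) (B : R -> Prop) : R :=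
  Series (fun i => if excluded_middle_informative (B (Qe i)) then a i else 0).

Definition Fk (k n : nat) : nat := (2 ^ n + k)%nat.
Definition lam (k i : nat) : R := / 2 ^ (Fk k i).

Definition J (m : nat) (t : R) : R -> Prop := fun q => is_rat q /\ INR m <= q < t.

Definition Lambda_m {Om : Type} (Qe : nat -> R) (k m : nat)
  (r : Om -> Om -> R) (a b : Om) : R :=
  pair_sum Qe (lam k) (J m (r a b)).

Definition Lambda {Om : Type} (Qe : nat -> R) (k : nat)
  (Rs : nat -> Om -> Om -> R) (x y : nat -> Om) : R :=
  Series (fun m => Lambda_m Qe k m (Rs m) (x m) (y m)).

Definition open_nonneg (U : R -> Prop) : Prop :=
  (forall x, U x -> 0 <= x) /\
  (forall x, U x -> exists eps, 0 < eps /\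
      forall y, 0 <= y -> Rabs (y - x) < eps -> U y).

Definition same_card {A : Type} (P P' : A -> Prop) : Prop :=
  exists (f : {x | P x} -> {x | P' x}) (g : {x | P' x} -> {x | P x}),
    (forall u, g (f u) = u) /\ (forall v, f (g v) = v).

Definition ubiq_dense (S : R -> Prop) : Prop :=
  (forall x, S x -> 0 <= x) /\
  (forall U, open_nonneg U -> (exists x, U x) ->
     same_card (fun x => U x /\ S x) S).

Definition dense_nonneg (S : R -> Prop) : Prop :=
  (forall x, S x -> 0 <= x) /\
  (forall U, open_nonneg U -> (exists x, U x) -> exists x, U x /\ S x).

Definition semi_metric {Y : Type} (T : R -> Prop) (r : Y -> Y -> R) : Prop :=
  (forall x y, 0 <= r x y) /\
  (forall x y, r x y = r y x) /\
  (forall x y, r x y = 0 <-> x = y) /\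
  (forall x y, x <> y -> T (r x y)).

Definition strongly_rigid {Y : Type} (r : Y -> Y -> R) : Prop :=
  forall x y u v, r x y = r u v -> r x y <> 0 ->
    (x = u /\ y = v) \/ (x = v /\ y = u).

Definition gauge_system {Om : Type} (S : R -> Prop) (Rs : nat -> Om -> Om -> R) : Prop :=
  dense_nonneg S /\
  forall i : nat,
    semi_metric (fun t => S t /\ INR i < t < INR i + 1) (Rs i) /\
    strongly_rigid (Rs i).

Definition card_continuum (Om : Type) : Prop :=
  exists (f : Om -> R) (g : R -> Om),
    (forall x, g (f x) = x) /\ (forall y, f (g y) = y).

(* open sets of the product topology: unions of basic cylinders
   {y | forall i in F, y i in V i}, F finite; every V i is open (Omega discrete) *)
Definition prod_open {Om : Type} (U : (nat -> Om) -> Prop) : Prop :=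
  forall x, U x -> exists (F : list nat) (V : nat -> Om -> Prop),
    (forall i, In i F -> V i (x i)) /\
    (forall y, (forall i, In i F -> V i (y i)) -> U y).

Definition is_metric {Y : Type} (d : Y -> Y -> R) : Prop :=
  (forall x y, 0 <= d x y) /\
  (forall x y, d x y = 0 <-> x = y) /\
  (forall x y, d x y = d y x) /\
  (forall x y z, d x z <= d x y + d y z).

Definition metric_open {Y : Type} (d : Y -> Y -> R) (U : Y -> Prop) : Prop :=
  forall x, U x -> exists eps, 0 < eps /\ forall y, d x y < eps -> U y.

Definition in_Met {Om : Type} (d : (nat -> Om) -> (nat -> Om) -> R) : Prop :=
  is_metric d /\ (forall U, prod_open U <-> metric_open d U).

Definition complete_metric {Y : Type} (d : Y -> Y -> R) : Prop :=
  forall u : nat -> Y,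
    (forall eps, 0 < eps -> exists N, forall n m, (N <= n)%nat -> (N <= m)%nat ->
        d (u n) (u m) < eps) ->
    exists l, forall eps, 0 < eps -> exists N, forall n, (N <= n)%nat -> d (u n) l < eps.

From Stdlib Require Import Reals Lra Lia List QArith Classical ClassicalEpsilon FunctionalExtensionality Wf_nat.
From Coquelicot Require Import Coquelicot.
Open Scope R_scope.

(* Since [r_m] takes its nonzero values in [(m, m+1)], the set [J(m, r_m(a,b))]
   lies in [[m, m+1)]: it is empty for [a = b], and otherwise it contains
   [m = Q(mu_m)] and no [Q(i)] with [i < mu_m].  As the weights decay
   geometrically, the [m]-th term of [Lambda^k[R]] is therefore [0] on the
   diagonal and lies in [[lam_(mu_m), 2 lam_(mu_m)]] off it.  Each term is thus
   a metric on [Omega], and [Lambda^k[R](x,y)] is small exactly when [x] and [y]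
   agree on a long initial segment, which yields the product topology and
   completeness.  The sets [J(m, _)] being disjoint, the whole sum is at most
   [sum_i lam_i <= 2 lam_0]. *)

Lemma ex_series_nonneg_le (a b : nat -> R) :
  (forall n, 0 <= a n <= b n) -> ex_series b -> ex_series a.
Proof.
  intros Hab Hb. apply (ex_series_le a b); [|exact Hb]. intros n.
  unfold norm; simpl; unfold abs; simpl.
  rewrite Rabs_pos_eq; apply Hab.
Qed.

Lemma sum_f_R0_le_Series (a : nat -> R) N :
  (forall n, 0 <= a n) -> ex_series a -> sum_f_R0 a N <= Series a.
Proof.
  intros Ha Hex. apply sum_incr; [|exact Ha].
  apply is_series_Reals, Series_correct, Hex.
Qed.

Lemma Series_ge_term (a : nat -> R) n :
  (forall n, 0 <= a n) -> ex_series a -> a n <= Series a.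
Proof.
  intros Ha Hex. eapply Rle_trans; [|apply (sum_f_R0_le_Series a n Ha Hex)].
  destruct n as [|n]; simpl; [lra|].
  pose proof (cond_pos_sum a n Ha). lra.
Qed.

Lemma Series_ge0 (a : nat -> R) :
  (forall n, 0 <= a n) -> ex_series a -> 0 <= Series a.
Proof.
  intros Ha Hex. eapply Rle_trans; [apply (Ha 0%nat)|]. apply Series_ge_term; auto.
Qed.

Lemma Series_zero (a : nat -> R) : (forall n, a n = 0) -> Series a = 0.
Proof.
  intros Ha. rewrite (Series_ext a (fun n => 0 * a n)) by (intros n; rewrite Ha; ring).
  rewrite Series_scal_l. ring.
Qed.

Lemma Series_le_of_partial_sums (a : nat -> R) B :
  ex_series a -> (forall N, sum_f_R0 a N <= B) -> Series a <= B.
Proof.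
  intros Hex Hb.
  apply (is_lim_seq_le (sum_n a) (fun _ => B) (Series a) B).
  - intros N. rewrite sum_n_Reals. apply Hb.
  - apply Series_correct, Hex.
  - apply is_lim_seq_const.
Qed.

Lemma is_series_half_geom c : is_series (fun n => c * (/2)^n) (2 * c).
Proof.
  replace (2 * c) with (c * / (1 - /2)) by field.
  apply (is_series_scal_l c (fun n => (/2)^n)), is_series_geom.
  rewrite Rabs_pos_eq; lra.
Qed.

Lemma Series_le_geom_tail (a : nat -> R) n c :
  (forall i, (i < n)%nat -> a i = 0) ->
  (forall j, 0 <= a (n + j)%nat <= c * (/2)^j) ->
  Series a <= 2 * c.
Proof.
  intros Hzero Hbound. rewrite (Series_incr_n_aux a n Hzero).
  rewrite <- (is_series_unique _ _ (is_series_half_geom c)).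
  apply Series_le; [exact Hbound|]. eexists. apply is_series_half_geom.
Qed.

Lemma sum_f_R0_le_of_single_support (f : nat -> R) c N :
  (forall m, 0 <= f m <= c) -> (forall m n, f m <> 0 -> f n <> 0 -> m = n) ->
  sum_f_R0 f N <= c.
Proof.
  intros Hf Hsupp. induction N as [|N IH]; simpl; [apply Hf|].
  destruct (Req_dec (f (S N)) 0) as [Hz|Hnz]; [rewrite Hz; lra|].
  rewrite sum_eq_R0; [pose proof (Hf (S N)); lra|].
  intros m Hm. destruct (Req_dec (f m) 0) as [|Hm0]; auto.
  specialize (Hsupp m (S N) Hm0 Hnz). lia.
Qed.

Lemma is_series_sum_f_R0 (f : nat -> nat -> R) N :
  (forall m, ex_series (f m)) ->
  is_series (fun i => sum_f_R0 (fun m => f m i) N) (sum_f_R0 (fun m => Series (f m)) N).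
Proof.
  intros Hf. induction N as [|N IH]; simpl.
  - apply Series_correct, Hf.
  - exact (is_series_plus _ _ _ _ IH (Series_correct _ (Hf (S N)))).
Qed.

Section PairSum.

Variables (Qe a : nat -> R).
Hypothesis a_ge0 : forall i, 0 <= a i.
Hypothesis a_summable : ex_series a.

Definition pair_term (B : R -> Prop) (i : nat) : R :=
  if excluded_middle_informative (B (Qe i)) then a i else 0.

Lemma pair_sum_Series B : pair_sum Qe a B = Series (pair_term B).
Proof. reflexivity. Qed.

Lemma pair_term_bounds B i : 0 <= pair_term B i <= a i.
Proof.
  unfold pair_term. destruct excluded_middle_informative; pose proof (a_ge0 i); lra.
Qed.

Lemma pair_term_summable B : ex_series (pair_term B).
Proof. apply (ex_series_nonneg_le _ a); [apply pair_term_bounds|exact a_summable]. Qed.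

Lemma pair_sum_ge0 B : 0 <= pair_sum Qe a B.
Proof.
  apply Series_ge0; [intros; apply pair_term_bounds|apply pair_term_summable].
Qed.

Lemma pair_sum_ge B i : B (Qe i) -> a i <= pair_sum Qe a B.
Proof.
  intros HB. rewrite pair_sum_Series.
  replace (a i) with (pair_term B i)
    by (unfold pair_term; destruct excluded_middle_informative; tauto).
  apply Series_ge_term; [intros; apply pair_term_bounds|apply pair_term_summable].
Qed.

Lemma pair_sum_empty B : (forall i, ~ B (Qe i)) -> pair_sum Qe a B = 0.
Proof.
  intros HB. apply Series_zero. intros i.
  destruct excluded_middle_informative as [H|]; [destruct (HB i H)|reflexivity].
Qed.

Lemma pair_sum_le_geom B n c :
  (forall i, B (Qe i) -> (n <= i)%nat) ->
  (forall j, a (n + j)%nat <= c * (/2)^j) ->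
  pair_sum Qe a B <= 2 * c.
Proof.
  intros Hsupp Hdecay. rewrite pair_sum_Series. apply Series_le_geom_tail with n.
  - intros i Hi. unfold pair_term. destruct excluded_middle_informative as [H|]; auto.
    specialize (Hsupp i H). lia.
  - intros j. pose proof (pair_term_bounds B (n + j)). pose proof (Hdecay j). lra.
Qed.

Lemma Series_pair_sum_disjoint_le (B : nat -> R -> Prop) :
  (forall m n q, B m q -> B n q -> m = n) ->
  ex_series (fun m => pair_sum Qe a (B m)) ->
  Series (fun m => pair_sum Qe a (B m)) <= Series a.
Proof.
  intros Hdisj Hex. apply Series_le_of_partial_sums; [exact Hex|]. intros N.
  change (sum_f_R0 (fun m => Series (pair_term (B m))) N <= Series a).
  rewrite <- (is_series_unique _ _
    (is_series_sum_f_R0 (fun m => pair_term (B m)) N (fun m => pair_term_summable (B m)))).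
  apply Series_le; [|exact a_summable]. intros i. split.
  - apply cond_pos_sum. intros m. apply pair_term_bounds.
  - apply sum_f_R0_le_of_single_support; [intros m; apply pair_term_bounds|].
    intros m n. unfold pair_term.
    destruct (excluded_middle_informative (B m (Qe i))) as [Hm|]; [|tauto].
    destruct (excluded_middle_informative (B n (Qe i))) as [Hn|]; [|tauto].
    intros _ _. exact (Hdisj m n (Qe i) Hm Hn).
Qed.

End PairSum.

Lemma pow_half_antitone m n : (m <= n)%nat -> (/2)^n <= (/2)^m.
Proof.
  intros Hmn. rewrite !pow_inv. apply Rinv_le_contravar.
  - apply pow_lt. lra.
  - apply Rle_pow; [lra|exact Hmn].
Qed.

Section Weights.

Variable k : nat.

Lemma lam_eq i : lam k i = (/2)^(Fk k i).
Proof. unfold lam. rewrite pow_inv. reflexivity. Qed.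

Lemma lam_pos i : 0 < lam k i.
Proof. rewrite lam_eq. apply pow_lt. lra. Qed.

Lemma lam_le_shift n j : lam k (n + j) <= lam k n * (/2)^j.
Proof.
  rewrite !lam_eq, <- pow_add. apply pow_half_antitone.
  unfold Fk. rewrite Nat.pow_add_r.
  pose proof (Nat.pow_gt_lin_r 2 j ltac:(lia)). pose proof (Nat.pow_gt_lin_r 2 n ltac:(lia)).
  nia.
Qed.

Lemma lam_antitone i j : (i <= j)%nat -> lam k j <= lam k i.
Proof.
  intros Hij. rewrite !lam_eq. apply pow_half_antitone.
  unfold Fk. pose proof (Nat.pow_le_mono_r 2 i j ltac:(lia) Hij). lia.
Qed.

Lemma lam_summable : ex_series (lam k).
Proof.
  apply (ex_series_nonneg_le _ (fun j => lam k 0 * (/2)^j)).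
  - intros j. split; [left; apply lam_pos|apply (lam_le_shift 0 j)].
  - eexists. apply is_series_half_geom.
Qed.

Lemma Series_lam_le : Series (lam k) <= 2 * lam k 0.
Proof.
  apply Series_le_geom_tail with 0%nat; [intros; lia|].
  intros j. split; [left; apply lam_pos|apply lam_le_shift].
Qed.

Lemma two_lam_le_pow m : 2 * lam k m <= (/2)^m.
Proof.
  assert (Hlam0 : lam k 0 <= /2).
  { rewrite lam_eq. replace (/2) with ((/2)^1) at 2 by ring.
    apply pow_half_antitone. unfold Fk. simpl. lia. }
  pose proof (lam_le_shift 0 m). pose proof (pow_lt (/2) m ltac:(lra)). simpl in *. nra.
Qed.

End Weights.

Lemma is_rat_INR m : is_rat (INR m).
Proof. exists (inject_Z (Z.of_nat m)). unfold Q2R; simpl. rewrite INR_IZR_INZ. field. Qed.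

Lemma unit_interval_unique m n q :
  INR m <= q < INR m + 1 -> INR n <= q < INR n + 1 -> m = n.
Proof.
  intros Hm Hn. destruct (Nat.lt_total m n) as [Hlt|[Heq|Hlt]]; auto;
    apply le_INR in Hlt; rewrite S_INR in Hlt; lra.
Qed.

Lemma semi_metric_mono {Y : Type} (T T' : R -> Prop) (r : Y -> Y -> R) :
  (forall t, T t -> T' t) -> semi_metric T r -> semi_metric T' r.
Proof. intros HT [H0 [Hsym [Hdiag Hval]]]. split; [|split; [|split]]; auto. Qed.

Section Level.

Variables (Om : Type) (Qe : nat -> R) (k m mu : nat) (r : Om -> Om -> R).
Hypothesis r_level : semi_metric (fun t => INR m < t < INR m + 1) r.
Hypothesis mu_min : is_mu Qe m mu.
Hypothesis Qe_mu : Qe mu = INR m.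

Lemma level_lt a b : r a b < INR m + 1.
Proof.
  destruct r_level as [_ [_ [Hdiag Hval]]].
  destruct (classic (a = b)) as [<-|Hab]; [|apply Hval, Hab].
  rewrite (proj2 (Hdiag a a) eq_refl). pose proof (pos_INR m). lra.
Qed.

Lemma J_level_unit_interval a b q : J m (r a b) q -> INR m <= q < INR m + 1.
Proof. intros [_ Hq]. pose proof (level_lt a b). lra. Qed.

Lemma Lambda_m_ge0 a b : 0 <= Lambda_m Qe k m r a b.
Proof. apply pair_sum_ge0; [intros; left; apply lam_pos|apply lam_summable]. Qed.

Lemma Lambda_m_sym a b : Lambda_m Qe k m r a b = Lambda_m Qe k m r b a.
Proof. unfold Lambda_m. destruct r_level as [_ [Hsym _]]. rewrite Hsym. reflexivity. Qed.

Lemma Lambda_m_diag a : Lambda_m Qe k m r a a = 0.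
Proof.
  destruct r_level as [_ [_ [Hdiag _]]]. unfold Lambda_m.
  rewrite (proj2 (Hdiag a a) eq_refl).
  apply pair_sum_empty. intros i [_ Hi]. pose proof (pos_INR m). lra.
Qed.

Lemma Lambda_m_ge a b : a <> b -> lam k mu <= Lambda_m Qe k m r a b.
Proof.
  intros Hab. destruct r_level as [_ [_ [_ Hval]]]. specialize (Hval a b Hab).
  apply pair_sum_ge; [intros; left; apply lam_pos|apply lam_summable|].
  rewrite Qe_mu. split; [apply is_rat_INR|lra].
Qed.

Lemma Lambda_m_le a b : Lambda_m Qe k m r a b <= 2 * lam k mu.
Proof.
  apply pair_sum_le_geom with (n := mu); [intros; left; apply lam_pos| |apply lam_le_shift].
  intros i Hi. apply (proj2 mu_min), (J_level_unit_interval a b), Hi.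
Qed.

(* Off the diagonal the values lie in [[c, 2c]], so the triangle inequality is free. *)
Lemma Lambda_m_triangle a b c :
  Lambda_m Qe k m r a c <= Lambda_m Qe k m r a b + Lambda_m Qe k m r b c.
Proof.
  pose proof (Lambda_m_ge0 a b). pose proof (Lambda_m_ge0 b c).
  destruct (classic (a = b)) as [<-|Hab]; [rewrite Lambda_m_diag; lra|].
  destruct (classic (b = c)) as [<-|Hbc]; [rewrite (Lambda_m_diag b); lra|].
  pose proof (Lambda_m_le a c). pose proof (Lambda_m_ge a b Hab).
  pose proof (Lambda_m_ge b c Hbc). lra.
Qed.

End Level.

Definition cauchy_seq {Y : Type} (d : Y -> Y -> R) (u : nat -> Y) : Prop :=
  forall eps, 0 < eps -> exists N, forall n m, (N <= n)%nat -> (N <= m)%nat ->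
    d (u n) (u m) < eps.

Lemma exists_pow_half_lt eps : 0 < eps -> exists M, 2 * (/2)^M < eps.
Proof.
  intros Heps. destruct (pow_lt_1_zero (/2)) with (y := eps / 2) as [M HM];
    [rewrite Rabs_pos_eq; lra|lra|].
  exists M. specialize (HM M (le_n _)).
  rewrite Rabs_pos_eq in HM; [lra|left; apply pow_lt; lra].
Qed.

Lemma In_le_list_max i l : In i l -> (i <= list_max l)%nat.
Proof.
  intros Hi. pose proof (proj1 (list_max_le l (list_max l)) (le_n _)) as Hall.
  rewrite Forall_forall in Hall. auto.
Qed.

Section LambdaMetric.

Variables (Om : Type) (Qe : nat -> R) (k : nat) (Rs : nat -> Om -> Om -> R) (mu : nat -> nat).
Hypothesis Rs_level : forall m, semi_metric (fun t => INR m < t < INR m + 1) (Rs m).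
Hypothesis mu_min : forall m, is_mu Qe m (mu m).
Hypothesis Qe_mu : forall m, Qe (mu m) = INR m.
Hypothesis mu_incr : forall m, (mu m < mu (S m))%nat.

Local Notation d := (Lambda Qe k Rs).
Local Notation term m a b := (Lambda_m Qe k m (Rs m) a b).

Lemma mu_monotone m n : (m <= n)%nat -> (mu m <= mu n)%nat.
Proof. intros Hmn. induction Hmn as [|n Hmn IH]; [lia|]. pose proof (mu_incr n). lia. Qed.

Lemma mu_ge m : (m <= mu m)%nat.
Proof. induction m as [|m IH]; [lia|]. pose proof (mu_incr m). lia. Qed.

Lemma Lambda_m_le_pow m a b : term m a b <= (/2)^m.
Proof.
  eapply Rle_trans; [apply Lambda_m_le with (mu := mu m); auto|].
  pose proof (lam_antitone k _ _ (mu_ge m)). pose proof (two_lam_le_pow k m). lra.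
Qed.

Lemma Lambda_summable (x y : nat -> Om) : ex_series (fun m => term m (x m) (y m)).
Proof.
  apply (ex_series_nonneg_le _ (fun m => (/2)^m)).
  - intros m. split; [apply Lambda_m_ge0|apply Lambda_m_le_pow].
  - apply ex_series_geom. rewrite Rabs_pos_eq; lra.
Qed.

Lemma Lambda_ge_coord x y m : x m <> y m -> lam k (mu m) <= d x y.
Proof.
  intros Hxy. apply Rle_trans with (term m (x m) (y m)).
  { apply Lambda_m_ge; auto. }
  apply (Series_ge_term (fun m => term m (x m) (y m))); [|apply Lambda_summable].
  intros n. apply Lambda_m_ge0.
Qed.

Lemma Lambda_coord_eq x y m : d x y < lam k (mu m) -> x m = y m.
Proof.
  intros Hd. apply NNPP. intros Hxy. pose proof (Lambda_ge_coord x y m Hxy). lra.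
Qed.

Lemma Lambda_le_agree x y M :
  (forall m, (m < M)%nat -> x m = y m) -> d x y <= 2 * (/2)^M.
Proof.
  intros Hagree. apply Series_le_geom_tail with M.
  - intros m Hm. rewrite (Hagree m Hm). apply Lambda_m_diag. auto.
  - intros j. rewrite <- pow_add.
    split; [apply Lambda_m_ge0|apply Lambda_m_le_pow].
Qed.

Lemma Lambda_is_metric : is_metric d.
Proof.
  split; [|split; [|split]].
  - intros x y. apply Series_ge0; [intros m; apply Lambda_m_ge0|apply Lambda_summable].
  - intros x y. split.
    + intros Hd. apply functional_extensionality. intros m.
      apply Lambda_coord_eq. rewrite Hd. apply lam_pos.
    + intros <-. apply Series_zero. intros m. apply Lambda_m_diag. auto.
  - intros x y. apply Series_ext. intros m. apply Lambda_m_sym. auto.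
  - intros x y z. unfold Lambda. rewrite <- Series_plus by apply Lambda_summable.
    apply Series_le.
    + intros m. split; [apply Lambda_m_ge0|apply Lambda_m_triangle with (mu := mu m); auto].
    + apply (ex_series_plus (fun m => term m (x m) (y m)) (fun m => term m (y m) (z m)));
        apply Lambda_summable.
Qed.

Lemma prod_open_metric_open U : prod_open U -> metric_open d U.
Proof.
  intros HU x Ux. destruct (HU x Ux) as [F [V [HVx HVU]]].
  exists (lam k (mu (list_max F))). split; [apply lam_pos|].
  intros y Hd. apply HVU. intros i Hi.
  rewrite <- (Lambda_coord_eq x y i); [auto|].
  eapply Rlt_le_trans; [exact Hd|].
  apply lam_antitone, mu_monotone, In_le_list_max, Hi.
Qed.

Lemma metric_open_prod_open U : metric_open d U -> prod_open U.
Proof.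
  intros HU x Ux. destruct (HU x Ux) as [eps [Heps Hball]].
  destruct (exists_pow_half_lt eps Heps) as [M HM].
  exists (seq 0 M), (fun i o => o = x i). split; [reflexivity|].
  intros y Hy. apply Hball. eapply Rle_lt_trans; [|exact HM].
  apply Lambda_le_agree. intros m Hm. symmetry. apply Hy, in_seq. lia.
Qed.

Lemma Lambda_in_Met : in_Met d.
Proof.
  split; [exact Lambda_is_metric|].
  intros U. split; [apply prod_open_metric_open|apply metric_open_prod_open].
Qed.

Lemma Lambda_le_diam x y : d x y <= 2 * lam k 0.
Proof.
  eapply Rle_trans; [apply Series_pair_sum_disjoint_le|apply Series_lam_le].
  - intros i. left. apply lam_pos.
  - apply lam_summable.
  - intros m n q Hm Hn. apply (unit_interval_unique m n q).
    + apply (J_level_unit_interval Om m (Rs m) (Rs_level m) (x m) (y m) q Hm).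
    + apply (J_level_unit_interval Om n (Rs n) (Rs_level n) (x n) (y n) q Hn).
  - apply Lambda_summable.
Qed.

Lemma cauchy_coord_eventually_const u m :
  cauchy_seq d u -> exists N, forall n, (N <= n)%nat -> u n m = u N m.
Proof.
  intros Hu. destruct (Hu (lam k (mu m)) (lam_pos _ _)) as [N HN].
  exists N. intros n Hn. apply Lambda_coord_eq, HN; lia.
Qed.

Lemma Lambda_complete : complete_metric d.
Proof.
  intros u Hu.
  assert (Hstab : forall m, {N | forall n, (N <= n)%nat -> u n m = u N m}).
  { intros m. apply constructive_indefinite_description.
    apply cauchy_coord_eventually_const. exact Hu. }
  exists (fun m => u (proj1_sig (Hstab m)) m). intros eps Heps.
  destruct (exists_pow_half_lt eps Heps) as [M HM].
  exists (list_max (map (fun m => proj1_sig (Hstab m)) (seq 0 M))). intros n Hn.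
  eapply Rle_lt_trans; [|exact HM]. apply Lambda_le_agree. intros m Hm.
  apply (proj2_sig (Hstab m)). eapply Nat.le_trans; [|exact Hn].
  apply In_le_list_max, (in_map (fun m => proj1_sig (Hstab m))), in_seq. lia.
Qed.

End LambdaMetric.

Lemma exists_is_mu Qe m : rat_enum Qe -> exists i, is_mu Qe m i.
Proof.
  intros [_ Hrange].
  set (P := fun i => INR m <= Qe i < INR m + 1).
  assert (HP : exists i, P i).
  { destruct (proj1 (Hrange (INR m)) (conj (is_rat_INR m) (pos_INR m))) as [i Hi].
    exists i. unfold P. rewrite Hi. lra. }
  destruct (dec_inh_nat_subset_has_unique_least_element P (fun i => classic (P i)) HP)
    as [i [[HPi Hleast] _]].
  exists i. split; [exact HPi|exact Hleast].
Qed.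

Lemma exists_mu_fun Qe : rat_enum Qe -> property_M Qe ->
  exists mu : nat -> nat, (forall m, is_mu Qe m (mu m)) /\
    (forall m, Qe (mu m) = INR m) /\ (forall m, (mu m < mu (S m))%nat).
Proof.
  intros Henum [Hval Hincr].
  exists (fun m => proj1_sig (constructive_indefinite_description _ (exists_is_mu Qe m Henum))).
  assert (Hmu : forall m, is_mu Qe m
    (proj1_sig (constructive_indefinite_description _ (exists_is_mu Qe m Henum))))
    by (intros m; apply proj2_sig).
  split; [exact Hmu|split; intros m; [apply Hval|apply (Hincr m)]; apply Hmu].
Qed.

Theorem proposition4p13 (Om : Type) (Qe : nat -> R) (k : nat)
  (S : R -> Prop) (Rs : nat -> Om -> Om -> R) :
  card_continuum Om ->
  rat_enum Qe -> property_M Qe ->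
  ubiq_dense S -> gauge_system S Rs ->
  in_Met (Lambda Qe k Rs) /\
  (forall x y, Lambda Qe k Rs x y <= 2 * / 2 ^ (Fk k 0)) /\
  complete_metric (Lambda Qe k Rs).
Proof.
  intros _ Henum HM _ [_ Hgauge].
  destruct (exists_mu_fun Qe Henum HM) as [mu [mu_min [Qe_mu mu_incr]]].
  assert (Rs_level : forall m, semi_metric (fun t => INR m < t < INR m + 1) (Rs m)).
  { intros m. apply (semi_metric_mono (fun t => S t /\ INR m < t < INR m + 1)); [tauto|].
    apply Hgauge. }
  split; [|split].
  - apply (Lambda_in_Met _ _ _ _ mu); assumption.
  - intros x y. apply (Lambda_le_diam _ _ _ _ mu); assumption.
  - apply (Lambda_complete _ _ _ _ mu); assumption.
Qed.
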